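(* A multiplicative function $m:\mathbb{R}_+\to\mathbb{R}_+$ is Jensen convex (i.e. $m\big(\frac{x+y}{2}\big)\le\frac{m(x)+m(y)}{2}$ for all $x,y>0$) if and only if there exists an additive function $a:\mathbb{R}\to\mathbb{R}$ such that \[ m(t)\ge 1+a(t-1)\qquad(t\in\mathbb{R}_+). \]
   Context: $\mathbb{R}_+=]0,\infty[$. $m:\mathbb{R}_+\to\mathbb{R}_+$ is multiplicative if $m(xy)=m(x)m(y)$ for all $x,y>0$; $a:\mathbb{R}\to\mathbb{R}$ is additive if $a(x+y)=a(x)+a(y)$ for all $x,y\in\mathbb{R}$. *)

From Stdlib Require Import Reals.
Open Scope R_scope.

(* A function m : R_+ -> R_+ is modelled as m : R -> R, only its values on
   ]0,oo[ matter; it maps positives to positives. *)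
Definition maps_Rpos_to_Rpos (m : R -> R) : Prop :=
  forall x, 0 < x -> 0 < m x.

Definition multiplicative_pos (m : R -> R) : Prop :=
  forall x y, 0 < x -> 0 < y -> m (x * y) = m x * m y.

Definition additive (a : R -> R) : Prop :=
  forall x y, a (x + y) = a x + a y.

Definition jensen_convex_pos (m : R -> R) : Prop :=
  forall x y, 0 < x -> 0 < y -> m ((x + y) / 2) <= (m x + m y) / 2.

(* A Jensen-convex function is convex along dyadic chords, so the quotients
   [(m (1 + 2^-k s) - 1) 2^k] decrease in [k]; midpoint convexity at [1] bounds them
   below by minus the quotients in direction [- s], so they converge to some [a s],
   and the quotient for [k = 0] gives [m (1 + s) >= 1 + a s].  Multiplicativity turns
   [(1 + h s) (1 + h t) = 1 + h (s + t) + h^2 s t] into [a (s + t) = a s + a t], the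
   [h^2] perturbation being negligible by convexity.  Conversely, writing [x] and [y]
   as multiples of their midpoint [z], the additive terms of the two minorants cancel
   and [m x + m y >= 2 m z]. *)

From Stdlib Require Import Reals Lra Lia.
From Stdlib Require Import ClassicalEpsilon.
Open Scope R_scope.

Definition dyadic (k : nat) : R := (/ 2) ^ k.

Lemma dyadic_pos k : 0 < dyadic k.
Proof. apply pow_lt; lra. Qed.

Lemma dyadic_S k : dyadic (S k) = dyadic k / 2.
Proof. unfold dyadic; simpl; field. Qed.

Lemma dyadic_le_1 k : dyadic k <= 1.
Proof.
  induction k as [|k IH]; [unfold dyadic; simpl; lra|].
  rewrite dyadic_S; pose proof (dyadic_pos k); lra.
Qed.

Lemma dyadic_cv_0 : Un_cv dyadic 0.
Proof.
  intros e He.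
  destruct (pow_lt_1_zero (/ 2) ltac:(rewrite Rabs_pos_eq; lra) e He) as [N HN].
  exists N; intros n Hn; unfold R_dist; rewrite Rminus_0_r; exact (HN n Hn).
Qed.

Lemma dyadic_eventually_pos c :
  exists K, forall k w, (K <= k)%nat -> Rabs w <= c -> 0 < 1 + dyadic k * w.
Proof.
  assert (Hc : 0 < Rabs c + 1) by (pose proof (Rabs_pos c); lra).
  destruct (pow_lt_1_zero (/ 2) ltac:(rewrite Rabs_pos_eq; lra) _ (Rinv_0_lt_compat _ Hc))
    as [K HK].
  exists K; intros k w Hk Hw.
  specialize (HK k Hk); fold (dyadic k) in HK.
  rewrite Rabs_pos_eq in HK by (left; apply dyadic_pos).
  assert (Hsmall : dyadic k * (Rabs c + 1) < 1).
  { apply Rmult_lt_reg_r with (/ (Rabs c + 1)); [now apply Rinv_0_lt_compat|].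
    rewrite Rmult_assoc, Rinv_r by lra; lra. }
  pose proof (dyadic_pos k); pose proof (Rle_abs c).
  pose proof (Rle_abs (- w)) as Hw'; rewrite Rabs_Ropp in Hw'; nra.
Qed.

Lemma Un_cv_const c : Un_cv (fun _ => c) c.
Proof.
  intros e He; exists 0%nat; intros n _.
  unfold R_dist; rewrite Rminus_diag, Rabs_R0; lra.
Qed.

Lemma Un_cv_squeeze (lo u hi : nat -> R) L :
  (exists K, forall k, (K <= k)%nat -> lo k <= u k <= hi k) ->
  Un_cv lo L -> Un_cv hi L -> Un_cv u L.
Proof.
  intros [K HK] Hlo Hhi e He.
  destruct (Hlo e He) as [N1 H1]; destruct (Hhi e He) as [N2 H2].
  exists (max K (max N1 N2)); intros n Hn.
  specialize (HK n ltac:(lia)); specialize (H1 n ltac:(lia)); specialize (H2 n ltac:(lia)).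
  unfold R_dist in *; apply Rabs_def2 in H1, H2; apply Rabs_def1; lra.
Qed.

Section JensenConvex.

Variable f : R -> R.
Hypothesis f_jensen : jensen_convex_pos f.

Lemma jensen_dyadic_chord k x y : 0 < x -> 0 < y ->
  f (x + dyadic k * (y - x)) - f x <= dyadic k * (f y - f x).
Proof.
  intros Hx Hy; induction k as [|k IH].
  - unfold dyadic; simpl; replace (x + 1 * (y - x)) with y by ring; lra.
  - set (z := x + dyadic k * (y - x)) in IH.
    assert (Hz : 0 < z).
    { unfold z; pose proof (dyadic_pos k); pose proof (dyadic_le_1 k); nra. }
    replace (x + dyadic (S k) * (y - x)) with ((x + z) / 2)
      by (unfold z; rewrite dyadic_S; field).
    pose proof (f_jensen x z Hx Hz); rewrite dyadic_S; lra.
Qed.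

Lemma jensen_dyadic_increment_bounds k x d : 0 < x - d -> 0 < x + d ->
  - (f (x - d) - f x) <= (f (x + dyadic k * d) - f x) / dyadic k <= f (x + d) - f x.
Proof.
  intros Hminus Hplus; set (h := dyadic k).
  assert (Hh : 0 < h) by apply dyadic_pos.
  assert (Hh1 : h <= 1) by apply dyadic_le_1.
  assert (Hx : 0 < x) by lra.
  pose proof (jensen_dyadic_chord k x (x + d) Hx Hplus) as Hup.
  pose proof (jensen_dyadic_chord k x (x - d) Hx Hminus) as Hdown.
  replace (x + dyadic k * (x + d - x)) with (x + h * d) in Hup by (unfold h; ring).
  replace (x + dyadic k * (x - d - x)) with (x - h * d) in Hdown by (unfold h; ring).
  fold h in Hup, Hdown.
  pose proof (f_jensen (x + h * d) (x - h * d) ltac:(nra) ltac:(nra)) as Hmid.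
  replace ((x + h * d + (x - h * d)) / 2) with x in Hmid by field.
  split; apply Rmult_le_reg_r with h; auto; unfold Rdiv;
    rewrite Rmult_assoc, Rinv_l by lra; lra.
Qed.

Definition dyadic_slope (s : R) (k : nat) : R := (f (1 + dyadic k * s) - f 1) / dyadic k.

Lemma dyadic_slope_S_le s k :
  0 < 1 + dyadic k * s -> dyadic_slope s (S k) <= dyadic_slope s k.
Proof.
  intros Hs; pose proof (dyadic_pos k) as Hh.
  pose proof (jensen_dyadic_chord 1 1 (1 + dyadic k * s) Rlt_0_1 Hs) as Hchord.
  replace (1 + dyadic 1 * (1 + dyadic k * s - 1)) with (1 + dyadic (S k) * s) in Hchord
    by (rewrite dyadic_S; unfold dyadic; simpl; field).
  unfold dyadic_slope; rewrite dyadic_S; unfold dyadic at 2 in Hchord; simpl in Hchord.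
  rewrite dyadic_S in Hchord.
  replace ((f (1 + dyadic k / 2 * s) - f 1) / (dyadic k / 2))
    with (2 * (f (1 + dyadic k / 2 * s) - f 1) / dyadic k) by (field; lra).
  apply Rmult_le_compat_r; [left; now apply Rinv_0_lt_compat | lra].
Qed.

Lemma dyadic_slope_le s K k :
  (forall j, (K <= j)%nat -> 0 < 1 + dyadic j * s) ->
  (K <= k)%nat -> dyadic_slope s k <= dyadic_slope s K.
Proof.
  intros Hvalid Hk; induction Hk as [|k Hk IH]; [lra|].
  apply Rle_trans with (dyadic_slope s k); auto using dyadic_slope_S_le.
Qed.

Lemma dyadic_slope_opp_le s k :
  0 < 1 + dyadic k * s -> 0 < 1 + dyadic k * - s ->
  - dyadic_slope (- s) k <= dyadic_slope s k.
Proof.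
  intros Hs Hs'; pose proof (dyadic_pos k).
  pose proof (f_jensen _ _ Hs Hs') as Hmid.
  replace ((1 + dyadic k * s + (1 + dyadic k * - s)) / 2) with 1 in Hmid by field.
  assert (Hsum : 0 <= (f (1 + dyadic k * s) - f 1 + (f (1 + dyadic k * - s) - f 1))
                      / dyadic k) by (apply Rmult_le_pos; [lra | left; now apply Rinv_0_lt_compat]).
  unfold dyadic_slope, Rdiv in *; lra.
Qed.

Lemma dyadic_slope_cv s : exists l, Un_cv (dyadic_slope s) l.
Proof.
  destruct (dyadic_eventually_pos (Rabs s)) as [K HK].
  assert (Hs : forall j, (K <= j)%nat -> 0 < 1 + dyadic j * s)
    by (intros j Hj; apply HK; [exact Hj | apply Rle_refl]).
  assert (Hs' : forall j, (K <= j)%nat -> 0 < 1 + dyadic j * - s)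
    by (intros j Hj; apply HK; [exact Hj | rewrite Rabs_Ropp; apply Rle_refl]).
  assert (Hdec : Un_decreasing (fun n => dyadic_slope s (n + K))).
  { intro n; apply dyadic_slope_S_le, Hs; lia. }
  assert (Hlb : has_lb (fun n => dyadic_slope s (n + K))).
  { exists (dyadic_slope (- s) K); intros x [n ->]; unfold opp_seq.
    pose proof (dyadic_slope_opp_le s (n + K)%nat (Hs (n + K)%nat ltac:(lia)) (Hs' (n + K)%nat ltac:(lia))).
    pose proof (dyadic_slope_le (- s) K (n + K)%nat Hs' ltac:(lia)); lra. }
  destruct (decreasing_cv _ Hdec Hlb) as [l Hl].
  exists l; eapply CV_shift; eauto.
Qed.

Lemma dyadic_slope_lim_le s l :
  -1 < s -> Un_cv (dyadic_slope s) l -> l <= f (1 + s) - f 1.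
Proof.
  intros Hs Hl.
  assert (Hvalid : forall j, (0 <= j)%nat -> 0 < 1 + dyadic j * s).
  { intros j _; pose proof (dyadic_pos j); pose proof (dyadic_le_1 j); nra. }
  replace (f (1 + s) - f 1) with (dyadic_slope s 0)
    by (unfold dyadic_slope, dyadic; simpl pow; rewrite Rmult_1_l, Rdiv_1_r; reflexivity).
  apply Rle_cv_lim with (dyadic_slope s) (fun _ => dyadic_slope s 0); auto using Un_cv_const.
  intro k; apply dyadic_slope_le; [exact Hvalid | lia].
Qed.

Lemma dyadic_slope_cv_value s l :
  Un_cv (dyadic_slope s) l -> Un_cv (fun k => f (1 + dyadic k * s)) (f 1).
Proof.
  intros Hl.
  apply Un_cv_ext with (fun k => f 1 + dyadic k * dyadic_slope s k).
  { intro k; unfold dyadic_slope; pose proof (dyadic_pos k); field; lra. }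
  enough (H : Un_cv (fun k => f 1 + dyadic k * dyadic_slope s k) (f 1 + 0 * l))
    by (rewrite Rmult_0_l, Rplus_0_r in H; exact H).
  apply CV_plus; [apply Un_cv_const | apply CV_mult; auto using dyadic_cv_0].
Qed.

End JensenConvex.

Lemma multiplicative_pos_1 m :
  maps_Rpos_to_Rpos m -> multiplicative_pos m -> m 1 = 1.
Proof.
  intros Hpos Hmul; pose proof (Hmul 1 1 Rlt_0_1 Rlt_0_1) as H11.
  rewrite Rmult_1_l in H11; pose proof (Hpos 1 Rlt_0_1).
  assert (Hfac : m 1 * (m 1 - 1) = 0) by nra.
  apply Rmult_integral in Hfac; lra.
Qed.

Section MultiplicativeJensen.

Variable m : R -> R.
Hypothesis m_pos : maps_Rpos_to_Rpos m.
Hypothesis m_mult : multiplicative_pos m.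
Hypothesis m_jensen : jensen_convex_pos m.

(* [(1 + h s) (1 + h t) = x + h (h s t)] with [x = 1 + h (s + t)], so the defect of
   the product rule is a dyadic increment of [m] at [x], controlled by convexity. *)
Lemma dyadic_slope_mult_defect_bounds k s t :
  let h := dyadic k in
  0 < 1 + h * s -> 0 < 1 + h * t ->
  0 < 1 + h * (s + t - s * t) -> 0 < 1 + h * (s + t + s * t) ->
  - (m (1 + h * (s + t - s * t)) - m (1 + h * (s + t)))
  <= dyadic_slope m s k * m (1 + h * t) + dyadic_slope m t k - dyadic_slope m (s + t) k
  <= m (1 + h * (s + t + s * t)) - m (1 + h * (s + t)).
Proof.
  intros h Hs Ht Hminus Hplus.
  assert (Hh : 0 < h) by apply dyadic_pos.
  set (x := 1 + h * (s + t)).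
  assert (Hdefect : dyadic_slope m s k * m (1 + h * t) + dyadic_slope m t k
                    - dyadic_slope m (s + t) k
                    = (m (x + h * (h * (s * t))) - m x) / h).
  { replace (x + h * (h * (s * t))) with ((1 + h * s) * (1 + h * t)) by (unfold x; ring).
    rewrite (m_mult _ _ Hs Ht).
    unfold dyadic_slope, x; fold h; rewrite (multiplicative_pos_1 m m_pos m_mult).
    field; lra. }
  rewrite Hdefect.
  replace (1 + h * (s + t - s * t)) with (x - h * (s * t)) in * by (unfold x; ring).
  replace (1 + h * (s + t + s * t)) with (x + h * (s * t)) in * by (unfold x; ring).
  exact (jensen_dyadic_increment_bounds m m_jensen k x (h * (s * t)) Hminus Hplus).
Qed.

Lemma dyadic_slope_lim_additive (D : R -> R) :
  (forall s, Un_cv (dyadic_slope m s) (D s)) -> additive D.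
Proof.
  intros HD s t.
  assert (Hvalue : forall w, Un_cv (fun k => m (1 + dyadic k * w)) 1).
  { intro w; pose proof (dyadic_slope_cv_value m w (D w) (HD w)) as Hw.
    rewrite (multiplicative_pos_1 m m_pos m_mult) in Hw; exact Hw. }
  assert (Hincr : forall w, Un_cv (fun k => m (1 + dyadic k * w) - m (1 + dyadic k * (s + t))) 0).
  { intro w; rewrite <- (Rminus_diag 1); apply CV_minus; apply Hvalue. }
  set (T k := dyadic_slope m s k * m (1 + dyadic k * t) + dyadic_slope m t k).
  assert (HT : Un_cv T (D s + D t)).
  { rewrite <- (Rmult_1_r (D s)); apply CV_plus; [apply CV_mult|]; auto. }
  assert (Hdefect : Un_cv (fun k => T k - dyadic_slope m (s + t) k) 0).
  { destruct (dyadic_eventually_pos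
                (Rabs s + Rabs t + Rabs (s + t - s * t) + Rabs (s + t + s * t))) as [K HK].
    apply Un_cv_squeeze
      with (fun k => - (m (1 + dyadic k * (s + t - s * t)) - m (1 + dyadic k * (s + t))))
           (fun k => m (1 + dyadic k * (s + t + s * t)) - m (1 + dyadic k * (s + t))).
    - exists K; intros k Hk.
      pose proof (Rabs_pos s); pose proof (Rabs_pos t).
      pose proof (Rabs_pos (s + t - s * t)); pose proof (Rabs_pos (s + t + s * t)).
      apply dyadic_slope_mult_defect_bounds; apply HK; auto; lra.
    - rewrite <- Ropp_0; apply CV_opp, Hincr.
    - apply Hincr. }
  apply (UL_sequence (dyadic_slope m (s + t))); [apply HD|].
  rewrite <- (Rminus_0_r (D s + D t)).
  apply Un_cv_ext with (fun k => T k - (T k - dyadic_slope m (s + t) k)); [intro k; ring|].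
  apply CV_minus; assumption.
Qed.

End MultiplicativeJensen.

Lemma additive_0 a : additive a -> a 0 = 0.
Proof. intros Ha; pose proof (Ha 0 0) as H; rewrite Rplus_0_r in H; lra. Qed.

Lemma jensen_of_additive_minorant m a :
  maps_Rpos_to_Rpos m -> multiplicative_pos m -> additive a ->
  (forall t, 0 < t -> m t >= 1 + a (t - 1)) -> jensen_convex_pos m.
Proof.
  intros Hpos Hmul Ha Hmin x y Hx Hy.
  set (z := (x + y) / 2).
  assert (Hz : 0 < z) by (unfold z; lra).
  assert (Hxz : 0 < x / z) by (apply Rdiv_lt_0_compat; auto).
  assert (Hyz : 0 < y / z) by (apply Rdiv_lt_0_compat; auto).
  assert (Hmx : m x = m z * m (x / z))
    by (rewrite <- Hmul by auto; f_equal; field; lra).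
  assert (Hmy : m y = m z * m (y / z))
    by (rewrite <- Hmul by auto; f_equal; field; lra).
  assert (Hcancel : a (x / z - 1) + a (y / z - 1) = 0).
  { rewrite <- Ha, <- (additive_0 a Ha); f_equal; unfold z; field; lra. }
  pose proof (Hmin _ Hxz); pose proof (Hmin _ Hyz); pose proof (Hpos z Hz).
  rewrite Hmx, Hmy; nra.
Qed.

Theorem theorem5 (m : R -> R) :
  maps_Rpos_to_Rpos m -> multiplicative_pos m ->
  (jensen_convex_pos m <->
   exists a : R -> R, additive a /\ forall t, 0 < t -> m t >= 1 + a (t - 1)).
Proof.
  intros Hpos Hmul; split.
  - intros Hjen.
    destruct (choice _ (dyadic_slope_cv m Hjen)) as [D HD].
    exists D; split; [exact (dyadic_slope_lim_additive m Hpos Hmul Hjen D HD)|].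
    intros t Ht.
    pose proof (dyadic_slope_lim_le m Hjen (t - 1) (D (t - 1)) ltac:(lra) (HD _)) as Hle.
    rewrite (multiplicative_pos_1 m Hpos Hmul) in Hle.
    replace (1 + (t - 1)) with t in Hle by ring; lra.
  - intros [a [Ha Hmin]]; exact (jensen_of_additive_minorant m a Hpos Hmul Ha Hmin).
Qed.
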